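(* Fix all parameters of the cathode model ($h_1,h_2,\sigma_{\mathrm{el}},\sigma_{\mathrm{ion}},\rho_a,D_2,M,F,R,T,A,j_{\mathrm{cell}}>0,V_2,C^{\mathrm{bulk}}$). Let $h_1<h_b<h_b'<h_2$. There do not exist two triples with all of the following properties: 1. $(\phi^{I}_{\mathrm{el}},\phi^{I}_{\mathrm{ion}},C^{I})$ is a cathode solution in the modified formulation with active-layer boundary $h_b$. 2. $(\phi^{II}_{\mathrm{el}},\phi^{II}_{\mathrm{ion}},C^{II})$ is a cathode solution in the modified formulation with active-layer boundary $h_b'$. 3. Their signed quantities $s^{I}$ and $s^{II}$ are nonnegative on $[h_1,h_b]$ and $[h_1,h_b']$ respectively. 4. $s^{II}(h_b)>0$. 5. On $[h_1,h_b]$ the function $C^{II}-C^{I}$ is positive and nonincreasing. In other words, under these conditions the active-layer boundary cannot be enlarged from $h_b$ to $h_b'$ while keeping the cell current and boundary data fixed.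
   Context: Cathode model (isothermal, 1D). Fix real numbers $0<h_1<h_b<h_2$ and positive constants $\sigma_{\mathrm{el}},\sigma_{\mathrm{ion}}$ (effective electronic/ionic conductivities), $\rho_a$ (air density), $D_2$ (effective diffusion coefficient), $M$ (molar mass of $O_2$), $F$ (Faraday constant), $R$ (gas constant), $T$ (temperature), $A$ (reaction surface area per volume). Also fix $j_{\mathrm{cell}}>0$, $V_2\in\mathbb R$ and $C^{\mathrm{bulk}}\in(0,1)$. Charge-transfer current. For $y\in(h_1,h_b)$ set $$i(y)=A\,K\,\Big(\frac{\rho_a R T\,C(y)}{M}\Big)^{0.2}\Big[\exp\Big(\frac{1.2F\eta(y)}{RT}\Big)-\exp\Big(-\frac{F\eta(y)}{RT}\Big)\Big],\qquad K=1.47\cdot10^{6}\,e^{-85859/(RT)}.$$ Define the signed quantity $$s(y)=\phi_{\mathrm{ion}}(y)-\phi_{\mathrm{el}}(y)-\frac{RT}{4F}\ln\frac{C^{\mathrm{bulk}}}{C(y)}.$$ The activation overpotential is $\eta=s$ in the classical formulation and $\eta=|s|$ in the modified formulation. A cathode solution with active-layer boundary $h_b$ is a triple $\phi_{\mathrm{el}},\phi_{\mathrm{ion}},C\in C^1([h_1,h_2])$ with the following properties. - Regularity: each function is $C^2$ on $[h_1,h_b]$ and on $[h_b,h_2]$, and $C>0$. - Equations on $(h_1,h_b)$: $(\sigma_{\mathrm{el}}\phi_{\mathrm{el}}')'=-i$, $(\sigma_{\mathrm{ion}}\phi_{\mathrm{ion}}')'=i$ and $(\rho_aD_2C')'=\frac{M}{4F}i$.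 - Equations on $(h_b,h_2)$: all three left-hand sides vanish. - Boundary conditions: $-\sigma_{\mathrm{el}}\phi_{\mathrm{el}}'(h_2)=j_{\mathrm{cell}}$, $\phi_{\mathrm{ion}}'(h_2)=0$, $\phi_{\mathrm{el}}(h_2)=V_2$, $C(h_2)=C^{\mathrm{bulk}}$, $\phi_{\mathrm{el}}'(h_1)=0$, $-\sigma_{\mathrm{ion}}\phi_{\mathrm{ion}}'(h_1)=j_{\mathrm{cell}}$, $C'(h_1)=0$. - Interface condition: $s(h_b)=0$, i.e. $\eta(h_b)=0$. In the claim, $s^{I}$ and $s^{II}$ denote the signed quantity $s$ computed from the respective triple. *)

From Stdlib Require Import Reals Lra.
Open Scope R_scope.

(** Model parameters. [Rg] is the gas constant (R is the type of reals). *)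
Record cathode_params := mkParams {
  h1 : R; h2 : R;
  sigma_el : R; sigma_ion : R;
  rho_a : R; D2 : R; Mm : R; Fc : R; Rg : R; Tt : R; Aa : R;
  j_cell : R; V2 : R; C_bulk : R }.

Definition valid_params (p : cathode_params) : Prop :=
  0 < h1 p /\ h1 p < h2 p /\
  0 < sigma_el p /\ 0 < sigma_ion p /\ 0 < rho_a p /\ 0 < D2 p /\
  0 < Mm p /\ 0 < Fc p /\ 0 < Rg p /\ 0 < Tt p /\ 0 < Aa p /\
  0 < j_cell p /\ 0 < C_bulk p /\ C_bulk p < 1.

(** f' is the derivative of f at x, relative to the closed interval [a,b]
    (one-sided at the endpoints, ordinary derivative in the interior). *)
Definition deriv_within (f : R -> R) (l : R) (a b x : R) : Prop :=
  forall eps, 0 < eps -> exists delta, 0 < delta /\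
    forall y, a <= y <= b -> y <> x -> Rabs (y - x) < delta ->
      Rabs ((f y - f x) / (y - x) - l) < eps.

Definition has_deriv_on (f f' : R -> R) (a b : R) : Prop :=
  forall x, a <= x <= b -> deriv_within f (f' x) a b x.

Definition cont_on (f : R -> R) (a b : R) : Prop :=
  forall x, a <= x <= b -> forall eps, 0 < eps -> exists delta, 0 < delta /\
    forall y, a <= y <= b -> Rabs (y - x) < delta -> Rabs (f y - f x) < eps.

Definition C1_with (f f' : R -> R) (a b : R) : Prop :=
  has_deriv_on f f' a b /\ cont_on f' a b.

Definition C2_with (f f' f'' : R -> R) (a b : R) : Prop :=
  has_deriv_on f f' a b /\ has_deriv_on f' f'' a b /\ cont_on f'' a b.

Definition Kconst (p : cathode_params) : R :=
  (147 / 100) * 10 ^ 6 * exp (- 85859 / (Rg p * Tt p)).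

Definition s_signed (p : cathode_params) (pel pion C : R -> R) (y : R) : R :=
  pion y - pel y - Rg p * Tt p / (4 * Fc p) * ln (C_bulk p / C y).

Definition eta (modified : bool) (p : cathode_params) (pel pion C : R -> R) (y : R) : R :=
  if modified then Rabs (s_signed p pel pion C y) else s_signed p pel pion C y.

Definition i_ct (modified : bool) (p : cathode_params) (pel pion C : R -> R) (y : R) : R :=
  let e := eta modified p pel pion C y in
  Aa p * Kconst p * Rpower (rho_a p * Rg p * Tt p * C y / Mm p) (2 / 10) *
  (exp (12 / 10 * Fc p * e / (Rg p * Tt p)) - exp (- (Fc p * e / (Rg p * Tt p)))).

(** Cathode solution with active-layer boundary hb. The first derivatives are
    global on [h1,h2] (C^1); the second derivatives are taken separately on
    [h1,hb] and [hb,h2] (piecewise C^2). *)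
Definition cathode_solution (modified : bool) (p : cathode_params) (hb : R)
    (pel pion C : R -> R) : Prop :=
  exists pel' pion' C' pelL pionL CL pelR pionR CR : R -> R,
    C1_with pel pel' (h1 p) (h2 p) /\ C1_with pion pion' (h1 p) (h2 p) /\
    C1_with C C' (h1 p) (h2 p) /\
    C2_with pel pel' pelL (h1 p) hb /\ C2_with pion pion' pionL (h1 p) hb /\
    C2_with C C' CL (h1 p) hb /\
    C2_with pel pel' pelR hb (h2 p) /\ C2_with pion pion' pionR hb (h2 p) /\
    C2_with C C' CR hb (h2 p) /\
    (forall y, h1 p <= y <= h2 p -> 0 < C y) /\
    (forall y, h1 p < y < hb ->
       sigma_el p * pelL y = - i_ct modified p pel pion C y /\
       sigma_ion p * pionL y = i_ct modified p pel pion C y /\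
       rho_a p * D2 p * CL y = Mm p / (4 * Fc p) * i_ct modified p pel pion C y) /\
    (forall y, hb < y < h2 p ->
       sigma_el p * pelR y = 0 /\ sigma_ion p * pionR y = 0 /\
       rho_a p * D2 p * CR y = 0) /\
    - sigma_el p * pel' (h2 p) = j_cell p /\
    pion' (h2 p) = 0 /\
    pel (h2 p) = V2 p /\
    C (h2 p) = C_bulk p /\
    pel' (h1 p) = 0 /\
    - sigma_ion p * pion' (h1 p) = j_cell p /\
    C' (h1 p) = 0 /\
    s_signed p pel pion C hb = 0.

(* In the active layer the two conservation laws (charge and oxygen flux),
   integrated from the boundary conditions at h1, express phi_el' and phi_ion'
   through C'; hence s' = gamma C' + const + (RT/4F) C'/C with gamma > 0.
   Suppose both solutions existed.  Since C^II - C^I is nonincreasing and both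
   gradients vanish at h1, C^II' <= C^I' on [h1,hb], while C^I' >= 0 because the
   current i is nonnegative.  Therefore s^II - s^I is nonincreasing on [h1,hb];
   as it is positive at hb (where s^I = 0), s^II > s^I >= 0 there.  The current
   is increasing in both eta = s >= 0 and C, so i^II > i^I, i.e. C^II'' > C^I'',
   so C^II' - C^I' becomes positive at hb, contradicting C^II' <= C^I'. *)

From Stdlib Require Import Reals Lra.
Open Scope R_scope.

(* Composing with [clamp a b] extends a function continuous within [a,b] to one
   continuous on all of R, which is what the Stdlib mean value theorem needs. *)
Definition clamp (a b t : R) : R := Rmax a (Rmin b t).

Lemma clamp_id a b t : a <= t <= b -> clamp a b t = t.
Proof. unfold clamp, Rmax, Rmin; intros; repeat destruct Rle_dec; lra. Qed.

Lemma clamp_in a b t : a <= b -> a <= clamp a b t <= b.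
Proof. unfold clamp, Rmax, Rmin; intros; repeat destruct Rle_dec; lra. Qed.

Lemma clamp_dist a b t x : a <= x <= b -> Rabs (clamp a b t - x) <= Rabs (t - x).
Proof.
  unfold clamp, Rmax, Rmin, Rabs; intros.
  repeat destruct Rle_dec; repeat destruct Rcase_abs; lra.
Qed.

Lemma continuity_pt_clamp_of_cont_on f a b x :
  cont_on f a b -> a <= x <= b -> continuity_pt (fun t => f (clamp a b t)) x.
Proof.
  intros Hf Hx eps Heps.
  destruct (Hf x Hx eps Heps) as [d [Hd Hnear]].
  exists d; split; [exact Hd|]; intros t [_ Ht]; simpl in *; unfold R_dist in *.
  rewrite (clamp_id a b x) by exact Hx.
  apply Hnear; [apply clamp_in; lra|].
  apply Rle_lt_trans with (Rabs (t - x)); [apply clamp_dist|]; assumption.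
Qed.

Lemma cont_on_of_continuity_pt_clamp f a b :
  (forall x, a <= x <= b -> continuity_pt (fun t => f (clamp a b t)) x) -> cont_on f a b.
Proof.
  intros Hf x Hx eps Heps.
  destruct (Hf x Hx eps Heps) as [d [Hd Hnear]].
  exists d; split; [exact Hd|]; intros y Hy Hyx.
  destruct (Req_dec y x) as [->|Hne]; [rewrite Rminus_diag, Rabs_R0; exact Heps|].
  specialize (Hnear y (conj (conj I (not_eq_sym Hne)) Hyx)); simpl in Hnear.
  now rewrite !clamp_id in Hnear.
Qed.

Lemma cont_on_le f a b a' b' : cont_on f a b -> a <= a' -> b' <= b -> cont_on f a' b'.
Proof.
  intros Hf Ha Hb x Hx eps Heps.
  destruct (Hf x ltac:(lra) eps Heps) as [d [Hd Hnear]].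
  exists d; split; [exact Hd|]; intros y Hy; apply Hnear; lra.
Qed.

Lemma cont_on_lin f g al be a b :
  cont_on f a b -> cont_on g a b -> cont_on (fun t => al * f t + be * g t) a b.
Proof.
  intros Hf Hg; apply cont_on_of_continuity_pt_clamp; intros x Hx.
  exact (continuity_pt_plus _ _ x
           (continuity_pt_scal _ al x (continuity_pt_clamp_of_cont_on f a b x Hf Hx))
           (continuity_pt_scal _ be x (continuity_pt_clamp_of_cont_on g a b x Hg Hx))).
Qed.

Lemma derivable_pt_lim_lin f g al be x l1 l2 :
  derivable_pt_lim f x l1 -> derivable_pt_lim g x l2 ->
  derivable_pt_lim (fun t => al * f t + be * g t) x (al * l1 + be * l2).
Proof.
  intros Hf Hg.
  exact (derivable_pt_lim_plus _ _ x _ _ (derivable_pt_lim_scal _ al x l1 Hf)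
           (derivable_pt_lim_scal _ be x l2 Hg)).
Qed.

Lemma deriv_within_derivable_pt_lim f l a b x :
  deriv_within f l a b x -> a < x < b -> derivable_pt_lim f x l.
Proof.
  intros Hf Hx eps Heps.
  destruct (Hf eps Heps) as [d [Hd Hq]].
  assert (Hm : 0 < Rmin d (Rmin (x - a) (b - x))) by (repeat apply Rmin_pos; lra).
  exists (mkposreal _ Hm); simpl; intros h Hh0 Hh.
  pose proof (Rmin_l d (Rmin (x - a) (b - x))).
  pose proof (Rmin_r d (Rmin (x - a) (b - x))).
  pose proof (Rmin_l (x - a) (b - x)); pose proof (Rmin_r (x - a) (b - x)).
  apply Rabs_def2 in Hh.
  specialize (Hq (x + h)); replace (x + h - x) with h in Hq by ring.
  apply Hq; [lra | intro; apply Hh0; lra | apply Rabs_def1; lra].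
Qed.

Lemma has_deriv_on_derivable_pt_lim f f' a b x :
  has_deriv_on f f' a b -> a < x < b -> derivable_pt_lim f x (f' x).
Proof. intros Hf Hx; apply deriv_within_derivable_pt_lim with a b; [apply Hf|]; lra. Qed.

Lemma has_deriv_on_cont_on f f' a b : has_deriv_on f f' a b -> cont_on f a b.
Proof.
  intros Hf x Hx eps Heps.
  destruct (Hf x Hx 1 Rlt_0_1) as [d [Hd Hq]].
  set (L := Rabs (f' x) + 1).
  assert (HL : 0 < L) by (unfold L; pose proof (Rabs_pos (f' x)); lra).
  exists (Rmin d (eps / L)); split; [apply Rmin_pos; [lra|apply Rdiv_lt_0_compat; lra]|].
  intros y Hy Hyx.
  pose proof (Rmin_l d (eps / L)); pose proof (Rmin_r d (eps / L)).
  destruct (Req_dec y x) as [->|Hne]; [rewrite Rminus_diag, Rabs_R0; exact Heps|].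
  assert (Hpos : 0 < Rabs (y - x)) by (apply Rabs_pos_lt; lra).
  assert (Hslope : Rabs ((f y - f x) / (y - x)) < L).
  { specialize (Hq y Hy Hne ltac:(lra)).
    pose proof (Rabs_triang ((f y - f x) / (y - x) - f' x) (f' x)).
    replace ((f y - f x) / (y - x) - f' x + f' x) with ((f y - f x) / (y - x)) in * by ring.
    unfold L; lra. }
  replace (f y - f x) with ((f y - f x) / (y - x) * (y - x)) by (field; lra).
  rewrite Rabs_mult.
  apply Rlt_le_trans with (L * (eps / L)); [|right; field; lra].
  apply Rmult_le_0_lt_compat; try apply Rabs_pos; lra.
Qed.

Lemma MVT_cont_on f f' a b : a < b -> cont_on f a b ->
  (forall x, a < x < b -> derivable_pt_lim f x (f' x)) ->
  exists c, a < c < b /\ f b - f a = f' c * (b - a).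
Proof.
  intros Hab Hf Hd.
  set (g := fun t => f (clamp a b t)).
  assert (Hdg : forall x, a < x < b -> derivable_pt_lim g x (f' x)).
  { intros x Hx; apply derivable_pt_lim_locally_ext with f a b; [exact Hx| |now apply Hd].
    intros z Hz; unfold g; rewrite clamp_id; lra. }
  assert (prg : forall c, a < c < b -> derivable_pt g c)
    by (intros c Hc; exists (f' c); exact (Hdg c Hc)).
  assert (prid : forall c, a < c < b -> derivable_pt id c) by (intros; apply derivable_pt_id).
  destruct (MVT g id a b prg prid Hab) as [c [Hc Heq]].
  - intros c Hc; now apply continuity_pt_clamp_of_cont_on.
  - intros c _; apply derivable_continuous_pt, derivable_pt_id.
  - exists c; split; [exact Hc|].
    rewrite (derive_pt_eq_0 _ _ _ (prg c Hc) (Hdg c Hc)),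
            (derive_pt_eq_0 _ _ _ (prid c Hc) (derivable_pt_lim_id c)) in Heq.
    unfold g, id in Heq; rewrite !clamp_id in Heq by lra; lra.
Qed.

Lemma cont_on_deriv_nonneg_le f f' a b : a <= b -> cont_on f a b ->
  (forall x, a < x < b -> derivable_pt_lim f x (f' x)) ->
  (forall x, a < x < b -> 0 <= f' x) -> f a <= f b.
Proof.
  intros [Hab|<-] Hf Hd Hpos; [|lra].
  destruct (MVT_cont_on f f' a b Hab Hf Hd) as [c [Hc Heq]].
  specialize (Hpos c Hc); nra.
Qed.

Lemma cont_on_deriv_pos_lt f f' a b : a < b -> cont_on f a b ->
  (forall x, a < x < b -> derivable_pt_lim f x (f' x)) ->
  (forall x, a < x < b -> 0 < f' x) -> f a < f b.
Proof.
  intros Hab Hf Hd Hpos.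
  destruct (MVT_cont_on f f' a b Hab Hf Hd) as [c [Hc Heq]].
  specialize (Hpos c Hc); nra.
Qed.

Lemma cont_on_lin_conserved f g f' g' al be a b : cont_on f a b -> cont_on g a b ->
  (forall x, a < x < b -> derivable_pt_lim f x (f' x)) ->
  (forall x, a < x < b -> derivable_pt_lim g x (g' x)) ->
  (forall x, a < x < b -> al * f' x + be * g' x = 0) ->
  forall x, a <= x <= b -> al * f x + be * g x = al * f a + be * g a.
Proof.
  intros Hf Hg Hdf Hdg Hzero x Hx.
  destruct (Req_dec x a) as [->|Hne]; [reflexivity|].
  assert (Hax : a < x) by (destruct Hx as [[|] _]; [assumption|congruence]).
  destruct (MVT_cont_on (fun t => al * f t + be * g t) (fun t => al * f' t + be * g' t) a x Hax)
    as [c [Hc Heq]].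
  - apply cont_on_le with a b; [apply cont_on_lin; assumption|lra|lra].
  - intros t Ht; apply derivable_pt_lim_lin; [apply Hdf|apply Hdg]; lra.
  - rewrite Hzero in Heq by lra; lra.
Qed.

Lemma derivable_pt_lim_nonpos f x l a : a < x -> derivable_pt_lim f x l ->
  (forall y, a <= y <= x -> f x <= f y) -> l <= 0.
Proof.
  intros Hax Hd Hmono.
  destruct (Rle_or_lt l 0) as [|Hl]; [assumption|exfalso].
  destruct (Hd (l / 2) ltac:(lra)) as [d Hq].
  pose proof (cond_pos d).
  pose proof (Rmin_l (d / 2) (x - a)); pose proof (Rmin_r (d / 2) (x - a)).
  assert (Hm : 0 < Rmin (d / 2) (x - a)) by (apply Rmin_pos; lra).
  set (m := Rmin (d / 2) (x - a)) in *.
  specialize (Hq (- m) ltac:(lra) ltac:(rewrite Rabs_left; lra)).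
  specialize (Hmono (x + - m) ltac:(lra)).
  assert ((f (x + - m) - f x) / - m <= 0).
  { unfold Rdiv; rewrite Rinv_opp.
    pose proof (Rinv_0_lt_compat m Hm); nra. }
  apply Rabs_def2 in Hq; lra.
Qed.

Lemma cont_on_s_signed p pel pion C a b : 0 < C_bulk p ->
  cont_on pel a b -> cont_on pion a b -> cont_on C a b ->
  (forall x, a <= x <= b -> 0 < C x) -> cont_on (s_signed p pel pion C) a b.
Proof.
  intros Hb Hel Hion HC Hpos; apply cont_on_of_continuity_pt_clamp; intros x Hx.
  assert (Hcx : 0 < C (clamp a b x)) by (rewrite clamp_id by exact Hx; auto).
  assert (Hratio : continuity_pt (fun t => C_bulk p / C (clamp a b t)) x).
  { apply continuity_pt_div; [apply continuity_pt_const; intros ? ?; reflexivity| |lra].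
    now apply continuity_pt_clamp_of_cont_on. }
  assert (Hln : continuity_pt ln (C_bulk p / C (clamp a b x))).
  { apply derivable_continuous_pt; exists (/ (C_bulk p / C (clamp a b x))).
    apply derivable_pt_lim_ln, Rdiv_lt_0_compat; assumption. }
  exact (continuity_pt_minus _ _ x
           (continuity_pt_minus _ _ x (continuity_pt_clamp_of_cont_on pion a b x Hion Hx)
                                      (continuity_pt_clamp_of_cont_on pel a b x Hel Hx))
           (continuity_pt_scal _ (Rg p * Tt p / (4 * Fc p)) x
                               (continuity_pt_comp _ _ x Hratio Hln))).
Qed.

Lemma derivable_pt_lim_s_signed p pel pion C x E P G :
  0 < C_bulk p -> 0 < Fc p -> 0 < C x ->
  derivable_pt_lim pel x E -> derivable_pt_lim pion x P -> derivable_pt_lim C x G ->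
  derivable_pt_lim (s_signed p pel pion C) x (P - E + Rg p * Tt p / (4 * Fc p) * (G / C x)).
Proof.
  intros Hb HF Hpos Hel Hion HC.
  assert (Hratio := derivable_pt_lim_div (fun _ => C_bulk p) C x 0 G
                      (derivable_pt_lim_const (C_bulk p) x) HC ltac:(lra)).
  assert (Hln := derivable_pt_lim_comp _ ln x _ _ Hratio
                   (derivable_pt_lim_ln (C_bulk p / C x) ltac:(apply Rdiv_lt_0_compat; auto))).
  assert (H := derivable_pt_lim_minus _ _ x _ _ (derivable_pt_lim_minus _ _ x _ _ Hion Hel)
                 (derivable_pt_lim_scal _ (Rg p * Tt p / (4 * Fc p)) x _ Hln)).
  unfold s_signed; replace (P - E + _) with
    (P - E - Rg p * Tt p / (4 * Fc p) *
             (/ (C_bulk p / C x) * ((0 * C x - G * C_bulk p) / (C x)²)));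
    [exact H|unfold Rsqr; field; lra].
Qed.

Definition butler_volmer (p : cathode_params) (e : R) : R :=
  exp (12 / 10 * Fc p * e / (Rg p * Tt p)) - exp (- (Fc p * e / (Rg p * Tt p))).

Lemma butler_volmer_lt p e1 e2 : 0 < Fc p -> 0 < Rg p * Tt p -> e1 < e2 ->
  butler_volmer p e1 < butler_volmer p e2.
Proof.
  intros HF HRT He; unfold butler_volmer, Rdiv.
  pose proof (Rinv_0_lt_compat _ HRT).
  assert (exp (12 / 10 * Fc p * e1 * / (Rg p * Tt p)) < exp (12 / 10 * Fc p * e2 * / (Rg p * Tt p)))
    by (apply exp_increasing; apply Rmult_lt_compat_r; nra).
  assert (exp (- (Fc p * e2 * / (Rg p * Tt p))) < exp (- (Fc p * e1 * / (Rg p * Tt p))))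
    by (apply exp_increasing, Ropp_lt_contravar, Rmult_lt_compat_r; nra).
  lra.
Qed.

Lemma butler_volmer_nonneg p e : 0 < Fc p -> 0 < Rg p * Tt p -> 0 <= e ->
  0 <= butler_volmer p e.
Proof.
  intros HF HRT [He|<-].
  - replace 0 with (butler_volmer p 0) by
      (unfold butler_volmer; rewrite !Rmult_0_r, !Rdiv_0_l, Ropp_0; ring).
    now apply Rlt_le, butler_volmer_lt.
  - unfold butler_volmer; rewrite !Rmult_0_r, !Rdiv_0_l, Ropp_0; lra.
Qed.

Lemma Kconst_pos p : 0 < Kconst p.
Proof. unfold Kconst; pose proof (exp_pos (- 85859 / (Rg p * Tt p))); lra. Qed.

Lemma i_ct_modified p pel pion C x : i_ct true p pel pion C x =
  Aa p * Kconst p * Rpower (rho_a p * Rg p * Tt p * C x / Mm p) (2 / 10) *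
  butler_volmer p (Rabs (s_signed p pel pion C x)).
Proof. reflexivity. Qed.

Lemma i_ct_modified_nonneg p pel pion C x : valid_params p -> 0 <= i_ct true p pel pion C x.
Proof.
  intros (_ & _ & _ & _ & _ & _ & _ & HF & HR & HT & HA & _).
  rewrite i_ct_modified.
  pose proof (Kconst_pos p).
  assert (0 < Rpower (rho_a p * Rg p * Tt p * C x / Mm p) (2 / 10)) by apply exp_pos.
  apply Rmult_le_pos; [apply Rlt_le, Rmult_lt_0_compat; [apply Rmult_lt_0_compat|]; assumption|].
  apply butler_volmer_nonneg; [assumption|nra|apply Rabs_pos].
Qed.

Lemma i_ct_modified_lt p pel1 pion1 C1 pel2 pion2 C2 x : valid_params p ->
  0 <= s_signed p pel1 pion1 C1 x -> s_signed p pel1 pion1 C1 x < s_signed p pel2 pion2 C2 x ->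
  0 < C1 x -> C1 x < C2 x ->
  i_ct true p pel1 pion1 C1 x < i_ct true p pel2 pion2 C2 x.
Proof.
  intros (_ & _ & _ & _ & Hrho & _ & HM & HF & HR & HT & HA & _) Hs1 Hs12 HC1 HC12.
  rewrite !i_ct_modified, !Rabs_pos_eq by lra.
  pose proof (Kconst_pos p).
  assert (Hbv1 := butler_volmer_nonneg p _ HF ltac:(nra) Hs1).
  assert (Hbv := butler_volmer_lt p _ _ HF ltac:(nra) Hs12).
  assert (Hpow : Rpower (rho_a p * Rg p * Tt p * C1 x / Mm p) (2 / 10) <
                 Rpower (rho_a p * Rg p * Tt p * C2 x / Mm p) (2 / 10)).
  { assert (0 < rho_a p * Rg p * Tt p) by (repeat apply Rmult_lt_0_compat; assumption).
    apply Rlt_Rpower_l; [lra|split; unfold Rdiv].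
    - apply Rmult_lt_0_compat; [nra|now apply Rinv_0_lt_compat].
    - apply Rmult_lt_compat_r; [now apply Rinv_0_lt_compat|nra]. }
  assert (0 < Rpower (rho_a p * Rg p * Tt p * C1 x / Mm p) (2 / 10)) by apply exp_pos.
  assert (0 < Aa p * Kconst p) by nra.
  apply Rmult_lt_compat_l with (r := Aa p * Kconst p) in Hpow; [|assumption].
  apply Rmult_le_0_lt_compat; nra.
Qed.

Definition s_slope (p : cathode_params) (g c : R) : R :=
  4 * Fc p * rho_a p * D2 p * (sigma_el p + sigma_ion p) / (Mm p * sigma_el p * sigma_ion p) * g
  - j_cell p / sigma_ion p + Rg p * Tt p / (4 * Fc p) * (g / c).

Lemma s_slope_of_balance_laws p g c E P : valid_params p ->
  sigma_el p * E + sigma_ion p * P = - j_cell p ->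
  rho_a p * D2 p * g - Mm p / (4 * Fc p) * sigma_ion p * P = Mm p / (4 * Fc p) * j_cell p ->
  P - E + Rg p * Tt p / (4 * Fc p) * (g / c) = s_slope p g c.
Proof.
  intros (_ & _ & Hel & Hion & _ & _ & HM & HF & _) Hcharge Hmass.
  assert (HE : E = (- j_cell p - sigma_ion p * P) / sigma_el p) by (field_simplify_eq; lra).
  assert (Hmass' : 4 * Fc p * rho_a p * D2 p * g - Mm p * sigma_ion p * P = Mm p * j_cell p).
  { transitivity (4 * Fc p * (rho_a p * D2 p * g - Mm p / (4 * Fc p) * sigma_ion p * P));
      [field; lra|rewrite Hmass; field; lra]. }
  assert (HP : P = (4 * Fc p * rho_a p * D2 p * g - Mm p * j_cell p) / (Mm p * sigma_ion p))
    by (field_simplify_eq; lra).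
  enough (P - E = 4 * Fc p * rho_a p * D2 p * (sigma_el p + sigma_ion p)
                   / (Mm p * sigma_el p * sigma_ion p) * g - j_cell p / sigma_ion p)
    by (unfold s_slope; lra).
  rewrite HE, HP; field; lra.
Qed.

(* What the comparison uses from a solution on the part [h1, b] of its active
   layer; [G] and [G'] are C' and C''. *)
Record active_layer (p : cathode_params) (b : R) (pel pion C G G' : R -> R) : Prop := {
  al_conc_pos : forall x, h1 p <= x <= h2 p -> 0 < C x;
  al_conc_deriv : forall x, h1 p < x < h2 p -> derivable_pt_lim C x (G x);
  al_grad_h1 : G (h1 p) = 0;
  al_grad_cont : cont_on G (h1 p) b;
  al_grad_deriv : forall x, h1 p < x < b -> derivable_pt_lim G x (G' x);
  al_fick : forall x, h1 p < x < b ->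
    rho_a p * D2 p * G' x = Mm p / (4 * Fc p) * i_ct true p pel pion C x;
  al_s_cont : cont_on (s_signed p pel pion C) (h1 p) b;
  al_s_deriv : forall x, h1 p < x < b ->
    derivable_pt_lim (s_signed p pel pion C) x (s_slope p (G x) (C x)) }.
Arguments al_conc_pos {p b pel pion C G G'}.
Arguments al_conc_deriv {p b pel pion C G G'}.
Arguments al_grad_h1 {p b pel pion C G G'}.
Arguments al_grad_cont {p b pel pion C G G'}.
Arguments al_grad_deriv {p b pel pion C G G'}.
Arguments al_fick {p b pel pion C G G'}.
Arguments al_s_cont {p b pel pion C G G'}.
Arguments al_s_deriv {p b pel pion C G G'}.

Lemma cathode_solution_active_layer p hb b pel pion C : valid_params p ->
  h1 p < b -> b <= hb -> hb < h2 p -> cathode_solution true p hb pel pion C ->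
  exists G G', active_layer p b pel pion C G G'.
Proof.
  intros Hv Hb Hbhb Hhb2 Hsol.
  pose proof Hv as (_ & _ & _ & _ & _ & _ & _ & HF & _ & _ & _ & _ & HCb & _).
  destruct Hsol as (pel' & pion' & C' & pelL & pionL & CL & _ & _ & _ &
    [Hpel Hpel'c] & [Hpion Hpion'c] & [HC HC'c] & [_ [Hpel2 _]] & [_ [Hpion2 _]] & [_ [HC2 _]] &
    _ & _ & _ & Hpos & Heq & _ & _ & _ & _ & _ & Bpel & Bpion & BC & _).
  exists C', CL.
  assert (Hpel'b := cont_on_le _ _ _ (h1 p) b Hpel'c (Rle_refl _) ltac:(lra)).
  assert (Hpion'b := cont_on_le _ _ _ (h1 p) b Hpion'c (Rle_refl _) ltac:(lra)).
  assert (HC'b := cont_on_le _ _ _ (h1 p) b HC'c (Rle_refl _) ltac:(lra)).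
  assert (Dsecond : forall f' f'', has_deriv_on f' f'' (h1 p) hb ->
                      forall x, h1 p < x < b -> derivable_pt_lim f' x (f'' x))
    by (intros f' f'' Hf x Hx; apply has_deriv_on_derivable_pt_lim with (h1 p) hb; [exact Hf|lra]).
  assert (Hcharge : forall x, h1 p <= x <= b ->
            sigma_el p * pel' x + sigma_ion p * pion' x = - j_cell p).
  { intros x Hx.
    rewrite (cont_on_lin_conserved _ _ pelL pionL _ _ _ _ Hpel'b Hpion'b
               (Dsecond _ _ Hpel2) (Dsecond _ _ Hpion2)), Bpel; [lra| |exact Hx].
    intros t Ht; destruct (Heq t ltac:(lra)) as (Eel & Eion & _); lra. }
  assert (Hmass : forall x, h1 p <= x <= b ->
            rho_a p * D2 p * C' x - Mm p / (4 * Fc p) * sigma_ion p * pion' x =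
            Mm p / (4 * Fc p) * j_cell p).
  { intros x Hx.
    pose proof (cont_on_lin_conserved _ _ CL pionL (rho_a p * D2 p)
                  (- (Mm p / (4 * Fc p) * sigma_ion p)) _ _ HC'b Hpion'b
                  (Dsecond _ _ HC2) (Dsecond _ _ Hpion2)) as Hcons.
    transitivity (rho_a p * D2 p * C' x + - (Mm p / (4 * Fc p) * sigma_ion p) * pion' x);
      [ring|rewrite Hcons, BC; [| |exact Hx]].
    - replace (- (Mm p / (4 * Fc p) * sigma_ion p) * pion' (h1 p)) with
        (Mm p / (4 * Fc p) * (- sigma_ion p * pion' (h1 p))) by ring.
      rewrite Bpion; ring.
    - intros t Ht; destruct (Heq t ltac:(lra)) as (_ & Eion & EC).
      rewrite EC, <- Eion; ring. }
  split.
  - exact Hpos.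
  - intros x Hx; exact (has_deriv_on_derivable_pt_lim _ _ _ _ x HC Hx).
  - exact BC.
  - exact HC'b.
  - exact (Dsecond _ _ HC2).
  - intros x Hx; apply Heq; lra.
  - apply cont_on_s_signed; [exact HCb| | | |intros; apply Hpos; lra].
    + exact (cont_on_le _ _ _ _ b (has_deriv_on_cont_on _ _ _ _ Hpel) (Rle_refl _) ltac:(lra)).
    + exact (cont_on_le _ _ _ _ b (has_deriv_on_cont_on _ _ _ _ Hpion) (Rle_refl _) ltac:(lra)).
    + exact (cont_on_le _ _ _ _ b (has_deriv_on_cont_on _ _ _ _ HC) (Rle_refl _) ltac:(lra)).
  - intros x Hx.
    rewrite <- (s_slope_of_balance_laws p (C' x) (C x) (pel' x) (pion' x) Hv
                  (Hcharge x ltac:(lra)) (Hmass x ltac:(lra))).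
    apply derivable_pt_lim_s_signed; auto; [apply Hpos; lra| | |];
      apply has_deriv_on_derivable_pt_lim with (h1 p) (h2 p); auto; lra.
Qed.

Lemma cathode_solution_interface m p hb pel pion C :
  cathode_solution m p hb pel pion C -> s_signed p pel pion C hb = 0.
Proof. intros (? & ? & ? & ? & ? & ? & ? & ? & ? & H); do 19 destruct H as [_ H]; exact H. Qed.

Lemma s_slope_le p g1 g2 c1 c2 : valid_params p ->
  0 <= g1 -> g2 <= g1 -> 0 < c1 < c2 -> s_slope p g2 c2 <= s_slope p g1 c1.
Proof.
  intros (_ & _ & Hel & Hion & Hrho & HD & HM & HF & HR & HT & _) Hg1 Hg Hc.
  assert (Hgain : 0 <= 4 * Fc p * rho_a p * D2 p * (sigma_el p + sigma_ion p)
                       / (Mm p * sigma_el p * sigma_ion p)).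
  { apply Rlt_le, Rdiv_lt_0_compat; repeat apply Rmult_lt_0_compat; lra. }
  assert (Hdiff : g2 / c2 <= g1 / c1).
  { apply Rle_trans with (g1 / c2).
    - apply Rmult_le_compat_r; [apply Rlt_le, Rinv_0_lt_compat|]; lra.
    - apply Rmult_le_compat_l; [lra|apply Rinv_le_contravar]; lra. }
  assert (0 <= Rg p * Tt p / (4 * Fc p)) by (apply Rlt_le, Rdiv_lt_0_compat; nra).
  unfold s_slope; nra.
Qed.

Lemma active_layer_grad_nonneg p b pel pion C G G' : valid_params p ->
  active_layer p b pel pion C G G' -> forall x, h1 p <= x <= b -> 0 <= G x.
Proof.
  intros Hv L x Hx.
  pose proof Hv as (_ & _ & _ & _ & Hrho & HD & HM & HF & _).
  rewrite <- (al_grad_h1 L).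
  apply cont_on_deriv_nonneg_le with G'; [lra| |intros; apply (al_grad_deriv L); lra|].
  - apply cont_on_le with (h1 p) b; [apply (al_grad_cont L)|lra|lra].
  - intros t Ht.
    assert (Hrd : 0 < rho_a p * D2 p) by (apply Rmult_lt_0_compat; lra).
    assert (0 <= rho_a p * D2 p * G' t); [|nra].
    rewrite (al_fick L t ltac:(lra)).
    apply Rmult_le_pos; [apply Rlt_le, Rdiv_lt_0_compat; lra|apply i_ct_modified_nonneg, Hv].
Qed.

Section Comparison.

Variables (p : cathode_params) (hb : R)
  (pel1 pion1 C1 G1 G1' pel2 pion2 C2 G2 G2' : R -> R).

Hypotheses (Hv : valid_params p) (Hh1 : h1 p < hb) (Hh2 : hb < h2 p)
  (L1 : active_layer p hb pel1 pion1 C1 G1 G1')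
  (L2 : active_layer p hb pel2 pion2 C2 G2 G2')
  (Hs1 : forall y, h1 p <= y <= hb -> 0 <= s_signed p pel1 pion1 C1 y)
  (Hs1_hb : s_signed p pel1 pion1 C1 hb = 0)
  (Hs2_hb : 0 < s_signed p pel2 pion2 C2 hb)
  (HC : forall y, h1 p <= y <= hb -> 0 < C2 y - C1 y)
  (HC_mono : forall x y, h1 p <= x -> x <= y -> y <= hb -> C2 y - C1 y <= C2 x - C1 x).

Lemma grad_gap_nonpos x : h1 p <= x <= hb -> G2 x - G1 x <= 0.
Proof.
  intros [[Hx|<-] Hxb].
  - apply derivable_pt_lim_nonpos with (f := fun t => 1 * C2 t + -1 * C1 t) (a := h1 p) (x := x);
      [exact Hx| |intros y Hy; specialize (HC_mono y x); lra].
    replace (G2 x - G1 x) with (1 * G2 x + -1 * G1 x) by ring.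
    apply derivable_pt_lim_lin; [apply (al_conc_deriv L2)|apply (al_conc_deriv L1)]; lra.
  - rewrite (al_grad_h1 L1), (al_grad_h1 L2); lra.
Qed.

Lemma s_gap_pos y : h1 p < y < hb ->
  s_signed p pel1 pion1 C1 y < s_signed p pel2 pion2 C2 y.
Proof.
  intros Hy.
  (* s1 - s2 is nondecreasing on [y, hb] and ends at -s2(hb) < 0 *)
  enough (1 * s_signed p pel1 pion1 C1 y + -1 * s_signed p pel2 pion2 C2 y <=
          1 * s_signed p pel1 pion1 C1 hb + -1 * s_signed p pel2 pion2 C2 hb) by lra.
  apply cont_on_deriv_nonneg_le
    with (a := y) (b := hb)
         (f := fun t => 1 * s_signed p pel1 pion1 C1 t + -1 * s_signed p pel2 pion2 C2 t)
         (f' := fun t => 1 * s_slope p (G1 t) (C1 t) + -1 * s_slope p (G2 t) (C2 t)); [lra|..].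
  - apply cont_on_le with (h1 p) hb; [|lra|lra].
    apply cont_on_lin; [apply (al_s_cont L1)|apply (al_s_cont L2)].
  - intros t Ht; apply derivable_pt_lim_lin;
      [apply (al_s_deriv L1)|apply (al_s_deriv L2)]; lra.
  - intros t Ht.
    assert (s_slope p (G2 t) (C2 t) <= s_slope p (G1 t) (C1 t)); [|lra].
    pose proof (grad_gap_nonpos t ltac:(lra)).
    pose proof (HC t ltac:(lra)).
    apply s_slope_le; [exact Hv|apply (active_layer_grad_nonneg _ _ _ _ _ _ _ Hv L1); lra|lra|].
    split; [apply (al_conc_pos L1)|]; lra.
Qed.

Lemma active_layer_comparison_absurd : False.
Proof.
  pose proof Hv as (_ & _ & _ & _ & Hrho & HD & HM & HF & _).
  (* the larger current of the second profile makes G2 - G1 strictly increase from 0 *)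
  assert (Hgap : 1 * G2 (h1 p) + -1 * G1 (h1 p) < 1 * G2 hb + -1 * G1 hb).
  { apply cont_on_deriv_pos_lt
      with (a := h1 p) (b := hb) (f := fun t => 1 * G2 t + -1 * G1 t)
           (f' := fun t => 1 * G2' t + -1 * G1' t); [exact Hh1|..].
    - apply cont_on_lin; [apply (al_grad_cont L2)|apply (al_grad_cont L1)].
    - intros t Ht; apply derivable_pt_lim_lin;
        [apply (al_grad_deriv L2)|apply (al_grad_deriv L1)]; lra.
    - intros t Ht.
      pose proof (al_fick L1 t Ht); pose proof (al_fick L2 t Ht).
      pose proof (HC t ltac:(lra)); pose proof (al_conc_pos L1 t ltac:(lra)).
      pose proof (i_ct_modified_lt p pel1 pion1 C1 pel2 pion2 C2 t Hv
                    (Hs1 t ltac:(lra)) (s_gap_pos t Ht) ltac:(lra) ltac:(lra)).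
      assert (0 < Mm p / (4 * Fc p)) by (apply Rdiv_lt_0_compat; lra).
      assert (Hrd : 0 < rho_a p * D2 p) by (apply Rmult_lt_0_compat; lra).
      assert (0 < rho_a p * D2 p * G2' t - rho_a p * D2 p * G1' t); nra. }
  rewrite (al_grad_h1 L1), (al_grad_h1 L2) in Hgap.
  pose proof (grad_gap_nonpos hb ltac:(lra)).
  lra.
Qed.

End Comparison.

Theorem mainTheorem5 :
  forall (p : cathode_params) (hb hb' : R),
    valid_params p ->
    h1 p < hb -> hb < hb' -> hb' < h2 p ->
    ~ exists pelI pionI CI pelII pionII CII : R -> R,
        cathode_solution true p hb pelI pionI CI /\
        cathode_solution true p hb' pelII pionII CII /\
        (forall y, h1 p <= y <= hb -> 0 <= s_signed p pelI pionI CI y) /\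
        (forall y, h1 p <= y <= hb' -> 0 <= s_signed p pelII pionII CII y) /\
        0 < s_signed p pelII pionII CII hb /\
        (forall y, h1 p <= y <= hb -> 0 < CII y - CI y) /\
        (forall x y, h1 p <= x -> x <= y -> y <= hb ->
           CII y - CI y <= CII x - CI x).
Proof.
  intros p hb hb' Hv Hh1 Hbb' Hb'h2
    (pelI & pionI & CI & pelII & pionII & CII & SI & SII & HsI & _ & HsII & HC & HC_mono).
  destruct (cathode_solution_active_layer p hb hb pelI pionI CI Hv Hh1 (Rle_refl hb)
              ltac:(lra) SI) as (GI & GI' & LI).
  destruct (cathode_solution_active_layer p hb' hb pelII pionII CII Hv Hh1 ltac:(lra)
              Hb'h2 SII) as (GII & GII' & LII).
  exact (active_layer_comparison_absurd p hb pelI pionI CI GI GI' pelII pionII CII GII GII'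
           Hv Hh1 ltac:(lra) LI LII HsI (cathode_solution_interface _ _ _ _ _ _ SI)
           HsII HC HC_mono).
Qed.
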